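(* In the setting of the context, the bilinear form $\langle a,b\rangle=\lambda^{-2}F(ae_2e_1b)$, $a\in A$, $b\in B$, is non-degenerate on $A\otimes B$.
   Context: $k$ is a field; $C_R(S)=\{r\in R:rs=sr\ \forall s\in S\}$. $N\subseteq M$ is a strongly separable, irreducible extension of $k$-algebras: $C_M(N)=k1$ and there are an $N$-bimodule map $E:M\to N$ and $x_1,\dots,x_n,y_1,\dots,y_n\in M$ with $\sum_iE(mx_i)y_i=m=\sum_ix_iE(y_im)$ for all $m\in M$, $E(1)\neq0$, $\sum_ix_iy_i\neq0$; normalized so that $E(1)=1$, whence $\sum_ix_iy_i=\lambda^{-1}1$ with $0\neq\lambda\in k$. Basic construction: given $S\subseteq R$, an $S$-bimodule map $E_S:R\to S$ with $E_S(1)=1$ and $r_i,s_i\in R$ with $\sum_iE_S(rr_i)s_i=r=\sum_ir_iE_S(s_ir)$ and $\sum_ir_is_i=\lambda^{-1}1$, set $R_1=R\otimes_SR$ with product $(a\otimes b)(c\otimes d)=aE_S(bc)\otimes d$, unit $\sum_ir_i\otimes s_i$, $R\subseteq R_1$ via $r\mapsto\sum_irr_i\otimes s_i$, Jones idempotent $e=1\otimes1$, $E_R:R_1\to R$, $a\otimes b\mapsto\lambda ab$; then $E_R$, $\lambda^{-1}r_i\otimes1$, $1\otimes s_i$ satisfy the same conditions with the same $\lambda$. From $(N\subseteq M,E)$ get $M_1,e_1,E_M$; from $(M\subseteq M_1,E_M)$ get $M_2,e_2,E_{M_1}$. Let $A=C_{M_1}(N)$, $B=C_{M_2}(M)$,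 $C=C_{M_2}(N)$. Depth 2 is assumed: $M_1$ is free as right $M$-module with basis in $A$, $M_2$ free as right $M_1$-module with basis in $B$. Let $F=E_M\circ E_{M_1}$; for $c\in C$, $F(c)\in C_M(N)=k1$, identified with $k$ (note $ae_2e_1b\in C$). *)

From HB Require Import structures.
From mathcomp Require Import all_boot all_algebra.
Set Implicit Arguments. Unset Strict Implicit. Unset Printing Implicit Defensive.
Import GRing.Theory.
Local Open Scope ring_scope.

(* Concrete model of the Jones basic construction for a strongly separable
   extension N ⊆ M with conditional expectation E and quasi-basis (x_i, y_i).
   M_1 = M ⊗_N M is modelled by its (injective, thanks to the quasi-basis)
   image in maps M -> M : a ⊗ b  |->  (z |-> a E(b z)); the product of M_1 is
   then composition, 1 = id, M ⊆ M_1 is left multiplication, e_1 = E.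
   M_2 = M_1 ⊗_M M_1 is likewise modelled by maps M_1 -> M_1 :
   φ ⊗ ψ |-> (χ |-> φ · E_M(ψ χ)). *)

Section BasicConstruction.
Variables (k : fieldType) (M : algType k).
Variables (E : M -> M) (n : nat) (x y : 'I_n -> M) (lam : k).

Definition T1 := M -> M.
Definition T2 := T1 -> T1.

Definition eq1 (f g : T1) : Prop := forall z, f z = g z.
Definition zero1 : T1 := fun _ => 0.
Definition comp1 (f g : T1) : T1 := fun z => f (g z).
(* embedding M -> M_1,  r |-> sum_i r x_i ⊗ y_i  =  left multiplication *)
Definition lmul (m : M) : T1 := fun z => m * z.
(* M_1 = M ⊗_N M : the elements sum_j a_j ⊗ b_j *)
Definition inM1 (f : T1) : Prop :=
  exists r (a b : 'I_r -> M), eq1 f (fun z => \sum_(j < r) a j * E (b j * z)).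
(* Jones idempotent e_1 = 1 ⊗ 1 *)
Definition e1 : T1 := E.
(* E_M : M_1 -> M,  a ⊗ b |-> lam a b *)
Definition EM (f : T1) : M := lam *: \sum_(i < n) f (x i) * y i.
(* quasi-basis of M ⊆ M_1 : lam^-1 x_i ⊗ 1 and 1 ⊗ y_i *)
Definition X1 (i : 'I_n) : T1 := fun z => lam^-1 *: (x i * E z).
Definition Y1 (i : 'I_n) : T1 := fun z => E (y i * z).

Definition eq2 (F G : T2) : Prop := forall f, inM1 f -> eq1 (F f) (G f).
Definition zero2 : T2 := fun _ => zero1.
Definition comp2 (F G : T2) : T2 := fun f => F (G f).
Definition lmul1 (f : T1) : T2 := fun g => comp1 f g.
(* M_2 = M_1 ⊗_M M_1 : the elements sum_j u_j ⊗ v_j *)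
Definition inM2 (F : T2) : Prop :=
  exists r (u v : 'I_r -> T1), (forall j, inM1 (u j) /\ inM1 (v j)) /\
    eq2 F (fun g z => \sum_(j < r) u j (EM (comp1 (v j) g) * z)).
(* Jones idempotent e_2 = 1 ⊗ 1 in M_2 *)
Definition e2 : T2 := fun g => lmul (EM g).
Definition EM1 (F : T2) : T1 := fun z => lam *: \sum_(i < n) F (X1 i) (Y1 i z).

Definition inA (Npred : {pred M}) (f : T1) : Prop :=
  inM1 f /\ forall m, m \in Npred -> eq1 (comp1 f (lmul m)) (comp1 (lmul m) f).
Definition inB (F : T2) : Prop :=
  inM2 F /\ forall m : M,
    eq2 (comp2 F (lmul1 (lmul m))) (comp2 (lmul1 (lmul m)) F).

Definition Fmap (G : T2) : M := EM (EM1 G).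

(* the bilinear form <a,b> = lam^-2 F(a e_2 e_1 b) (value in k1 ⊆ M) *)
Definition pairing (a : T1) (b : T2) : M :=
  lam ^- 2 *: Fmap (comp2 (lmul1 a) (comp2 e2 (comp2 (lmul1 e1) b))).

(* depth 2: M_1 free as right M-module with (finite) basis in A *)
Definition depth2_M1 (Npred : {pred M}) : Prop :=
  exists p (alpha : 'I_p -> T1),
    (forall j, inA Npred (alpha j)) /\
    (forall f, inM1 f -> exists c : 'I_p -> M,
        eq1 f (fun z => \sum_(j < p) alpha j (c j * z))) /\
    (forall c : 'I_p -> M,
        eq1 (fun z => \sum_(j < p) alpha j (c j * z)) zero1 ->
        forall j, c j = 0).

(* depth 2: M_2 free as right M_1-module with (finite) basis in B *)
Definition depth2_M2 : Prop :=
  exists q (beta : 'I_q -> T2),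
    (forall j, inB (beta j)) /\
    (forall F, inM2 F -> exists c : 'I_q -> T1,
        (forall j, inM1 (c j)) /\
        eq2 F (fun g z => \sum_(j < q) beta j (comp1 (c j) g) z)) /\
    (forall c : 'I_q -> T1, (forall j, inM1 (c j)) ->
        eq2 (fun g z => \sum_(j < q) beta j (comp1 (c j) g) z) zero2 ->
        forall j, eq1 (c j) zero1).

End BasicConstruction.
Arguments zero1 {k M}.
Arguments zero2 {k M}.

(* A is the set of N-bimodule endomorphisms of M, and every b in B is
   determined by t = b e_1 in A through b g z = \sum_l g (x_l) t (y_l z).
   In these terms <a, b> = mu (a o t^* ), where mu : M ⊗_N M -> M is the
   multiplication map and t^* the adjoint of t for the form (u, v) |-> E (u v).
   Depth 2 makes A span M_1 as a right M-module (basis of M_1 over M) and as a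
   left M-module (basis of M_2 over M_1, evaluated at e_1).  Hence <a, -> = 0
   gives mu (a o al) = 0 for all al in A and so a = 0, while <-, b> = 0 gives
   mu (f o t^* ) = 0 for all f in M_1; taking f = E (m -) yields t^** = 0, and
   nondegeneracy of E (u v) gives t^* = 0, t = 0 and b = 0. *)

Set Warnings "-notation-overridden,-ambiguous-paths,-notation-incompatible-prefix".
From mathcomp Require Import all_boot all_algebra.
Set Implicit Arguments. Unset Strict Implicit. Unset Printing Implicit Defensive.
Import GRing.Theory.
Local Open Scope ring_scope.

Section BasicConstructionTheory.
Variables (k : fieldType) (M : algType k) (Npred : {pred M}).
Hypothesis hN : subalg_closed Npred.
Variable E : M -> M.
Hypothesis hEN : forall m, E m \in Npred.
Hypothesis hEadd : forall m m', E (m + m') = E m + E m'.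
Hypothesis hEbimod : forall a m b, a \in Npred -> b \in Npred -> E (a * m * b) = a * E m * b.
Variables (n : nat) (x y : 'I_n -> M) (lam : k).
Hypothesis hlam : lam != 0.
Hypothesis hqb1 : forall m, \sum_(i < n) E (m * x i) * y i = m.
Hypothesis hqb2 : forall m, \sum_(i < n) x i * E (y i * m) = m.

Lemma Npred1 : 1 \in Npred. Proof. by case: hN. Qed.

Lemma Npred_scalar c : c%:A \in Npred.
Proof. by case: (GRing.subalg_closed_semi hN) => N1 _ NZ _; apply: NZ. Qed.

Definition right_Nlinear (h : T1 M) : Prop :=
  {morph h : u v / u + v} /\ forall w m, m \in Npred -> h (w * m) = h w * m.

Definition left_Nlinear (h : T1 M) : Prop :=
  forall m w, m \in Npred -> h (m * w) = m * h w.

Lemma E_rNlin : right_Nlinear E.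
Proof.
split=> [u v | w m hm]; first exact: hEadd.
by have := hEbimod w Npred1 hm; rewrite !mul1r.
Qed.

Lemma E_lNlin : left_Nlinear E.
Proof. by move=> m w hm; have := hEbimod w hm Npred1; rewrite !mulr1. Qed.

Section RightNlinear.
Variable h : T1 M.
Hypothesis hh : right_Nlinear h.

Lemma rNlin0 : h 0 = 0.
Proof. by apply: (addrI (h 0)); rewrite -hh.1 !addr0. Qed.

Lemma rNlin_sum I (r : seq I) (P : pred I) (F : I -> M) :
  h (\sum_(i <- r | P i) F i) = \sum_(i <- r | P i) h (F i).
Proof. exact: (big_morph h hh.1 rNlin0). Qed.

Lemma rNlinZ c w : h (c *: w) = c *: h w.
Proof. by rewrite -mulr_algr hh.2 ?Npred_scalar // mulr_algr. Qed.

Lemma rNlin_expand z : h z = \sum_(i < n) h (x i) * E (y i * z).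
Proof. by rewrite -{1}(hqb2 z) rNlin_sum; apply: eq_bigr => i _; rewrite hh.2. Qed.

End RightNlinear.

Lemma E0 : E 0 = 0. Proof. exact: rNlin0 E_rNlin. Qed.

Lemma rNlin_comp f g : right_Nlinear f -> right_Nlinear g -> right_Nlinear (comp1 f g).
Proof.
move=> hf hg; split=> [u v | w m hm]; rewrite /comp1; first by rewrite hg.1 hf.1.
by rewrite hg.2 // hf.2.
Qed.

Lemma rNlin_lmul m : right_Nlinear (lmul m).
Proof. by split=> [u v | w m' hm]; rewrite /lmul ?mulrDr ?mulrA. Qed.

Lemma rNlin_sumf I (r : seq I) (G : I -> T1 M) :
  (forall i, right_Nlinear (G i)) -> right_Nlinear (fun w => \sum_(i <- r) G i w).
Proof.
move=> hG; split=> [u v | w m hm].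
- by rewrite -big_split /=; apply: eq_bigr => i _; rewrite (hG i).1.
- by rewrite mulr_suml; apply: eq_bigr => i _; rewrite (hG i).2.
Qed.

Lemma inM1_rNlin h : inM1 E h -> right_Nlinear h.
Proof.
case=> r [a [b hab]]; split=> [u v | w m hm]; rewrite !hab.
- by rewrite -big_split /=; apply: eq_bigr => j _; rewrite mulrDr hEadd mulrDr.
- by rewrite mulr_suml; apply: eq_bigr => j _; rewrite mulrA E_rNlin.2 // mulrA.
Qed.

Lemma rNlin_inM1 h : right_Nlinear h -> inM1 E h.
Proof. by move=> hh; exists n, (fun i => h (x i)), y; apply: rNlin_expand. Qed.

Lemma inM1_comp f g : inM1 E f -> inM1 E g -> inM1 E (comp1 f g).
Proof. by move=> /inM1_rNlin hf /inM1_rNlin hg; apply: rNlin_inM1; apply: rNlin_comp. Qed.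

Lemma inM1_E : inM1 E E. Proof. exact: rNlin_inM1 E_rNlin. Qed.

Lemma inM1_lmul m : inM1 E (lmul m). Proof. exact: rNlin_inM1 (rNlin_lmul m). Qed.

Lemma inA_bimod h : inA E Npred h <-> right_Nlinear h /\ left_Nlinear h.
Proof.
split=> [[/inM1_rNlin hR hL] | [hR hL]].
  by split=> // m w hm; apply: hL.
by split; [exact: rNlin_inM1 | move=> m hm w; apply: hL].
Qed.

(* The multiplication map M ⊗_N M -> M, a ⊗ b |-> a b, in the model of M_1 by
   maps on M; E_M is lam times it. *)
Definition mul_map (f : T1 M) : M := \sum_(i < n) f (x i) * y i.

Lemma EM_mul_map f : EM x y lam f = lam *: mul_map f. Proof. by []. Qed.

Lemma mul_map_rmul h c : right_Nlinear h ->
  mul_map (comp1 h (lmul c)) = mul_map h * c.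
Proof.
move=> hh; rewrite /mul_map /comp1 /lmul.
under eq_bigr => i _ do rewrite (rNlin_expand hh (c * x i)) mulr_suml.
rewrite exchange_big mulr_suml /=; apply: eq_bigr => j _.
under eq_bigr => i _ do rewrite -mulrA.
rewrite -mulr_sumr; under eq_bigr => i _ do rewrite mulrA.
by rewrite hqb1 mulrA.
Qed.

Lemma EM_rmul h c : right_Nlinear h -> EM x y lam (comp1 h (lmul c)) = EM x y lam h * c.
Proof. by move=> hh; rewrite !EM_mul_map mul_map_rmul // scalerAl. Qed.

Lemma EM_cong f g : eq1 f g -> EM x y lam f = EM x y lam g.
Proof. by move=> fg; rewrite !EM_mul_map /mul_map; under eq_bigr do rewrite fg. Qed.

Lemma sum_Ex_y : \sum_(i < n) E (x i) * y i = 1.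
Proof. by have := hqb1 1; under eq_bigr do rewrite mul1r. Qed.

Lemma EM_e1 : EM x y lam E = lam%:A.
Proof. by rewrite EM_mul_map /mul_map sum_Ex_y. Qed.

Section InM2.
Variable b : T2 M.
Hypothesis hb : inM2 E x y lam b.

Lemma M2_cong g1 g2 : inM1 E g1 -> inM1 E g2 -> eq1 g1 g2 -> eq1 (b g1) (b g2).
Proof.
case: hb => r [u [v [_ hbuv]]] h1 h2 h12 z.
rewrite (hbuv _ h1) (hbuv _ h2); apply: eq_bigr => j _.
by rewrite (@EM_cong (comp1 (v j) g1) (comp1 (v j) g2)) // => w; rewrite /comp1 h12.
Qed.

Lemma M2_rNlin g : inM1 E g -> right_Nlinear (b g).
Proof.
case: hb => r [u [v [huv hbuv]]] hg; split=> [w w' | w m hm]; rewrite !(hbuv _ hg).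
- by rewrite -big_split /=; apply: eq_bigr => j _; rewrite mulrDr (inM1_rNlin (huv j).1).1.
- by rewrite mulr_suml; apply: eq_bigr => j _; rewrite mulrA (inM1_rNlin (huv j).1).2.
Qed.

Lemma M2_rmul g c : inM1 E g -> eq1 (b (comp1 g (lmul c))) (fun z => b g (c * z)).
Proof.
case: hb => r [u [v [huv hbuv]]] hg z.
rewrite (hbuv _ hg) (hbuv _ (inM1_comp hg (inM1_lmul c))); apply: eq_bigr => j _.
rewrite -[comp1 _ (comp1 _ _)]/(comp1 (comp1 (v j) g) (lmul c)) EM_rmul ?mulrA //.
by apply: rNlin_comp; apply: inM1_rNlin => //; apply: (huv j).2.
Qed.

Lemma M2_sum I (r : seq I) (G : I -> T1 M) : (forall i, inM1 E (G i)) ->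
  eq1 (b (fun w => \sum_(i <- r) G i w)) (fun z => \sum_(i <- r) b (G i) z).
Proof.
case: hb => q [u [v [huv hbuv]]] hG z.
have hS : inM1 E (fun w => \sum_(i <- r) G i w).
  by apply/rNlin_inM1/rNlin_sumf => i; apply: inM1_rNlin.
rewrite (hbuv _ hS); under [RHS]eq_bigr => i _ do rewrite (hbuv _ (hG i)).
rewrite exchange_big /=; apply: eq_bigr => j _.
have hu := inM1_rNlin (huv j).1; have hv := inM1_rNlin (huv j).2.
rewrite -(rNlin_sum hu) -mulr_suml; congr (u j (_ * z)).
rewrite !EM_mul_map /mul_map /comp1 -scaler_sumr; congr (_ *: _).
under eq_bigr => l _ do rewrite (rNlin_sum hv) mulr_suml.
by rewrite exchange_big.
Qed.

End InM2.

(* Left and right adjoints for the N-valued form (u, v) |-> E (u v). *)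
Definition adjointL (h : T1 M) : T1 M := fun m => \sum_(l < n) E (m * h (x l)) * y l.
Definition adjointR (h : T1 M) : T1 M := fun v => \sum_(m < n) x m * E (h (y m) * v).

(* Inverse of the isomorphism B -> A, b |-> b e_1. *)
Definition B_of_A (t : T1 M) : T2 M := fun g z => \sum_(l < n) g (x l) * t (y l * z).

Lemma E_adjointL h m v : right_Nlinear h -> E (m * h v) = E (adjointL h m * v).
Proof.
move=> hh; rewrite (rNlin_expand hh v) mulr_sumr mulr_suml !(rNlin_sum E_rNlin).
apply: eq_bigr => l _.
by rewrite mulrA E_rNlin.2 // -[in RHS]mulrA (E_lNlin _ (hEN _)).
Qed.

Lemma adjointL_eq0 h : right_Nlinear h -> (forall m, adjointL h m = 0) ->
  forall v, h v = 0.
Proof.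
move=> hh h0 v; rewrite -(hqb2 (h v)) big1 // => i _.
by rewrite E_adjointL // h0 mul0r E0 mulr0.
Qed.

Lemma adjointL_rNlin t : inA E Npred t -> right_Nlinear (adjointL t).
Proof.
case/inA_bimod=> hR hL; split=> [w w' | w m hm]; rewrite /adjointL.
  by rewrite -big_split /=; apply: eq_bigr => l _; rewrite mulrDl hEadd mulrDl.
have e l : E (w * m * t (x l)) = \sum_(j < n) E (w * t (x j)) * E (y j * m * x l).
  rewrite -mulrA -hL // (rNlin_expand hR (m * x l)) mulr_sumr (rNlin_sum E_rNlin).
  by apply: eq_bigr => j _; rewrite mulrA E_rNlin.2 // mulrA.
under eq_bigr => l _ do rewrite e mulr_suml.
rewrite exchange_big mulr_suml /=; apply: eq_bigr => j _.
under eq_bigr => l _ do rewrite -mulrA.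
by rewrite -mulr_sumr hqb1 mulrA.
Qed.

Lemma adjointR_inA al : inA E Npred al -> inA E Npred (adjointR al).
Proof.
case/inA_bimod=> hR hL; apply/inA_bimod; split.
  split=> [w w' | w m hm]; rewrite /adjointR.
    by rewrite -big_split /=; apply: eq_bigr => j _; rewrite mulrDr hEadd mulrDr.
  by rewrite mulr_suml; apply: eq_bigr => j _; rewrite mulrA E_rNlin.2 // mulrA.
move=> m v hm; rewrite /adjointR.
have e j : al (y j) * m = \sum_(l < n) E (y j * m * x l) * al (y l).
  rewrite -hR.2 // -{1}(hqb1 (y j * m)) (rNlin_sum hR).
  by apply: eq_bigr => l _; rewrite hL.
under eq_bigr => j _ do rewrite mulrA e mulr_suml (rNlin_sum E_rNlin) mulr_sumr.
rewrite exchange_big mulr_sumr /=; apply: eq_bigr => l _.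
under eq_bigr => j _ do rewrite -mulrA E_lNlin // mulrA -(mulrA (y j)).
by rewrite -mulr_suml hqb2 mulrA.
Qed.

Lemma adjointL_adjointR al w : inA E Npred al -> adjointL (adjointR al) w = al w.
Proof.
case/inA_bimod=> hR hL; rewrite /adjointL /adjointR.
under eq_bigr => l _ do rewrite mulr_sumr (rNlin_sum E_rNlin) mulr_suml.
rewrite exchange_big /= -[in RHS](hqb1 w) (rNlin_sum hR); apply: eq_bigr => j _.
under eq_bigr => l _ do rewrite mulrA E_rNlin.2 // -mulrA.
by rewrite -mulr_sumr hqb1 hL.
Qed.

Lemma B_of_A_e1 t w : inA E Npred t -> B_of_A t E w = t w.
Proof.
case/inA_bimod=> hR hL; rewrite /B_of_A -[in RHS](mul1r w) -sum_Ex_y mulr_suml.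
rewrite (rNlin_sum hR); apply: eq_bigr => l _.
by rewrite -mulrA -hL ?hEN.
Qed.

Lemma B_of_A_inB t : inA E Npred t -> inB E x y lam (B_of_A t).
Proof.
case/inA_bimod=> hR hL; split; last first.
  by move=> m g _ z; rewrite /comp2 /lmul1 /B_of_A /comp1 /lmul mulr_sumr;
     apply: eq_bigr => l _; rewrite mulrA.
exists n, (fun i w => lam^-1 *: (x i * t w)), (Y1 E y); split.
  move=> i; split; apply: rNlin_inM1.
    split=> [u v | u m hm]; first by rewrite hR.1 mulrDr scalerDr.
    by rewrite hR.2 // mulrA scalerAl.
  split=> [u v | u m hm]; rewrite /Y1; first by rewrite mulrDr hEadd.
  by rewrite mulrA E_rNlin.2.
move=> g _ z; rewrite /B_of_A /comp1 /Y1.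
under [RHS]eq_bigr => i _ do rewrite EM_mul_map -scalerAl (rNlinZ hR) -scalerAr
  scalerA mulVf // scale1r mulr_suml (rNlin_sum hR) mulr_sumr.
rewrite exchange_big /=; apply: eq_bigr => l _.
under eq_bigr => i _ do rewrite -mulrA hL // mulrA.
by rewrite -mulr_suml hqb2.
Qed.

Section InB.
Variable b : T2 M.
Hypothesis hb : inB E x y lam b.
Let hb2 : inM2 E x y lam b. Proof. by case: hb. Qed.

Lemma inB_lmul m g : inM1 E g -> eq1 (b (comp1 (lmul m) g)) (comp1 (lmul m) (b g)).
Proof. by case: hb => _ hcomm hg; apply: hcomm. Qed.

Lemma inB_e1_inA : inA E Npred (b E).
Proof.
split; first exact: rNlin_inM1 (M2_rNlin hb2 inM1_E).
move=> m hm z; rewrite /comp1 /lmul -(M2_rmul hb2 m inM1_E z).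
rewrite (@M2_cong b hb2 _ (comp1 (lmul m) E)); last 3 first.
- exact: inM1_comp inM1_E (inM1_lmul m).
- exact: inM1_comp (inM1_lmul m) inM1_E.
- by move=> w; rewrite /comp1 /lmul E_lNlin.
exact: inB_lmul inM1_E z.
Qed.

Lemma inB_B_of_A g z : inM1 E g -> b g z = B_of_A (b E) g z.
Proof.
move=> hg; pose G i := comp1 (lmul (g (x i))) (comp1 E (lmul (y i))).
have hG i : inM1 E (G i).
  exact: inM1_comp (inM1_lmul _) (inM1_comp inM1_E (inM1_lmul _)).
have hS : inM1 E (fun w => \sum_(i < n) G i w).
  by apply: rNlin_inM1; apply: rNlin_sumf => i; apply: inM1_rNlin.
rewrite (M2_cong hb2 hg hS (rNlin_expand (inM1_rNlin hg))) (M2_sum hb2 _ hG).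
apply: eq_bigr => i _; rewrite /G inB_lmul; last exact: inM1_comp inM1_E (inM1_lmul _).
by rewrite /comp1 /lmul (M2_rmul hb2 _ inM1_E).
Qed.

Lemma inB_X1 i : eq1 (b (X1 E x lam i)) (fun w => lam^-1 *: (x i * b E w)).
Proof.
move=> w; rewrite (@M2_cong b hb2 _ (comp1 (lmul (lam^-1 *: x i)) E)).
- rewrite inB_lmul; last exact: inM1_E.
  by rewrite /comp1 /lmul /= scalerAl.
- apply: rNlin_inM1; split=> [u v | u m hm]; rewrite /X1.
    by rewrite hEadd mulrDr scalerDr.
  by rewrite E_rNlin.2 // mulrA scalerAl.
- exact: inM1_comp (inM1_lmul _) inM1_E.
- by move=> u; rewrite /X1 /comp1 /lmul scalerAl.
Qed.

End InB.

Lemma pairing_expand a b : right_Nlinear a ->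
  pairing E x y lam a b = \sum_(i < n) a (EM x y lam (comp1 E (b (X1 E x lam i)))) * y i.
Proof.
move=> ha.
rewrite /pairing /Fmap EM_mul_map /mul_map /EM1 /comp2 /lmul1 /e2 /comp1 /lmul /Y1 /=.
under eq_bigr => i _ do under eq_bigr => j _ do rewrite ha.2 ?hEN //.
under eq_bigr => i _ do rewrite -scalerAl mulr_suml.
rewrite -scaler_sumr exchange_big /= !scalerA.
have -> : lam ^- 2 * lam * lam = 1 by rewrite -mulrA -expr2 mulVf // expf_neq0.
rewrite scale1r; apply: eq_bigr => j _.
by under eq_bigr => i _ do rewrite -mulrA; rewrite -mulr_sumr hqb1.
Qed.

Lemma pairing_inB a b : right_Nlinear a -> inB E x y lam b ->
  pairing E x y lam a b = mul_map (comp1 a (adjointL (b E))).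
Proof.
move=> ha hb; rewrite pairing_expand //; apply: eq_bigr => i _; congr (a _ * _).
rewrite EM_mul_map /mul_map /comp1 /adjointL scaler_sumr; apply: eq_bigr => l _.
by rewrite inB_X1 // (rNlinZ E_rNlin) -scalerAl scalerA mulfV // scale1r.
Qed.

Lemma mul_map_nondeg_l a : depth2_M1 E Npred -> right_Nlinear a ->
  (forall al, inA E Npred al -> mul_map (comp1 a al) = 0) -> forall z, a z = 0.
Proof.
case=> p [alpha [halpha [hspan _]]] ha ha0 z.
have [c hc] := hspan _ (inM1_comp (inM1_lmul z) inM1_E).
have -> : a z = mul_map (comp1 a (comp1 (lmul z) E)).
  rewrite /mul_map /comp1 /lmul.
  under eq_bigr => i _ do rewrite ha.2 ?hEN // -mulrA.
  by rewrite -mulr_sumr sum_Ex_y mulr1.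
rewrite /mul_map {1}/comp1.
under eq_bigr => i _ do rewrite hc (rNlin_sum ha) mulr_suml.
rewrite exchange_big big1 // => j _ /=.
rewrite -[LHS]/(mul_map (comp1 (comp1 a (alpha j)) (lmul (c j)))).
by rewrite mul_map_rmul ?ha0 ?mul0r //; apply: rNlin_comp ha (inM1_rNlin (halpha j).1).
Qed.

Lemma M1_left_span_A f : depth2_M2 E x y lam -> inM1 E f ->
  exists q (d : 'I_q -> M) (ta : 'I_q -> T1 M),
    (forall j, inA E Npred (ta j)) /\ forall z, lam *: f z = \sum_(j < q) d j * ta j z.
Proof.
case=> q [beta [hbeta [hspan _]]] hf.
have hF : inM2 E x y lam (fun g => comp1 f (lmul (EM x y lam g))).
  exists 1%N, (fun _ => f), (fun _ w => w); split=> [_ | g _ z]; last by rewrite big_ord1.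
  by split=> //; apply: rNlin_inM1; split.
have [c [hc hfc]] := hspan _ hF.
exists q, (fun j => c j 1), (fun j => beta j E); split=> [j | z].
  by apply: inB_e1_inA; apply: hbeta.
have := hfc E inM1_E z; rewrite /comp1 /lmul EM_e1 mulr_algl (rNlinZ (inM1_rNlin hf)) => ->.
apply: eq_bigr => j _; rewrite -[RHS](inB_lmul (hbeta j) _ inM1_E).
apply: (M2_cong _ (inM1_comp (hc j) inM1_E) (inM1_comp (inM1_lmul _) inM1_E)).
  by case: (hbeta j).
by move=> w; rewrite /comp1 /lmul -{1}(mul1r (E w)) (inM1_rNlin (hc j)).2.
Qed.

Lemma mul_map_nondeg_r s : depth2_M2 E x y lam -> right_Nlinear s ->
  (forall a, inA E Npred a -> mul_map (comp1 a s) = 0) -> forall v, s v = 0.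
Proof.
move=> hD2 hs hs0.
have hf0 f : inM1 E f -> mul_map (comp1 f s) = 0.
  move=> hf; have [q [d [ta [hta hd]]]] := M1_left_span_A hD2 hf.
  apply: (scalerI hlam); rewrite scaler0 scaler_sumr.
  under eq_bigr => i _ do rewrite scalerAl /comp1 hd mulr_suml.
  rewrite exchange_big big1 // => j _ /=.
  under eq_bigr => i _ do rewrite -mulrA.
  by rewrite -mulr_sumr -[X in _ * X]/(mul_map (comp1 (ta j) s)) hs0 ?mulr0.
apply: adjointL_eq0 => // m.
exact: hf0 (inM1_comp inM1_E (inM1_lmul m)).
Qed.

Lemma pairing_nondeg_l a : depth2_M1 E Npred -> inA E Npred a ->
  (forall b, inB E x y lam b -> pairing E x y lam a b = 0) -> eq1 a zero1.
Proof.
move=> hD1 ha ha0; have hR := inM1_rNlin ha.1.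
apply: (mul_map_nondeg_l hD1 hR) => al hal.
have hb := B_of_A_inB (adjointR_inA hal).
rewrite -(ha0 _ hb) pairing_inB // /mul_map; apply: eq_bigr => i _; congr (a _ * _).
rewrite -[LHS](adjointL_adjointR (x i) hal); apply: eq_bigr => l _.
by rewrite B_of_A_e1 //; apply: adjointR_inA.
Qed.

Lemma pairing_nondeg_r b : depth2_M2 E x y lam -> inB E x y lam b ->
  (forall a, inA E Npred a -> pairing E x y lam a b = 0) -> eq2 E b zero2.
Proof.
move=> hD2 hb hb0 g hg z; have ht := inB_e1_inA hb.
suff t0 w : b E w = 0.
  by rewrite inB_B_of_A // /B_of_A big1 // => l _; rewrite t0 mulr0.
apply: (adjointL_eq0 (inM1_rNlin ht.1)).
apply: (mul_map_nondeg_r hD2 (adjointL_rNlin ht)) => a ha.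
by rewrite -pairing_inB ?hb0 //; exact: inM1_rNlin ha.1.
Qed.

End BasicConstructionTheory.

Theorem proposition4p1
  (k : fieldType) (M : algType k) (Npred : {pred M})
  (hN : subalg_closed Npred)
  (E : M -> M)
  (hEN : forall m, E m \in Npred)
  (hEadd : forall m m', E (m + m') = E m + E m')
  (hEbimod : forall a m b, a \in Npred -> b \in Npred -> E (a * m * b) = a * E m * b)
  (hirr : forall m : M, (forall a, a \in Npred -> m * a = a * m) ->
            exists c : k, m = c%:A)
  (n : nat) (x y : 'I_n -> M) (lam : k)
  (hlam : lam != 0)
  (hqb1 : forall m, \sum_(i < n) E (m * x i) * y i = m)
  (hqb2 : forall m, \sum_(i < n) x i * E (y i * m) = m)
  (hE1 : E 1 = 1)
  (hxy : \sum_(i < n) x i * y i = lam^-1%:A)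
  (hD1 : depth2_M1 E Npred)
  (hD2 : depth2_M2 E x y lam) :
  (forall a, inA E Npred a ->
     (forall b, inB E x y lam b -> pairing E x y lam a b = 0) -> eq1 a zero1) /\
  (forall b, inB E x y lam b ->
     (forall a, inA E Npred a -> pairing E x y lam a b = 0) -> eq2 E b zero2).
Proof.
split=> [a | b].
- exact: (pairing_nondeg_l hN hEN hEadd hEbimod hlam hqb1 hqb2 hD1).
- exact: (pairing_nondeg_r hN hEN hEadd hEbimod hlam hqb1 hqb2 hD2).
Qed.
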